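(* Let $(X,d)$ be a metric space with $|X|\ge 2$, let $\tilde x=(x_n)$ be a sequence of points of $X$, and let $\tilde x'=(x_{n(k)})$ be an infinite subsequence of $\tilde x$ such that $\limsup_{n\to\infty}\frac{|K_{\tilde x'}(n)|}{n}=0$. Then there exist a sequence $\tilde y$ of points of $X$ and a subsequence $\tilde y'$ of $\tilde y$ such that $\tilde x$ and $\tilde y$ are statistically equivalent, $K_{\tilde y'}=K_{\tilde x'}$, and $\tilde y'$ is not $d$-statistically convergent.
   Context: For a subsequence $\tilde z'=(z_{n(k)})$ of a sequence $(z_n)$ (with $(n(k))$ strictly increasing), $K_{\tilde z'}=\{n(k):k\in\mathbb N\}$ and $K_{\tilde z'}(n)=\{m\in K_{\tilde z'}: m\le n\}$. A set $M\subseteq\mathbb N$ is statistical dense if $\lim_{n\to\infty}|\{m\in M:m\le n\}|/n=1$. Sequences $(x_n),(y_n)$ are statistically equivalent if $x_n=y_n$ for all $n$ in some statistical dense set $M\subseteq\mathbb N$. A sequence $(z_k)$ is $d$-statistically convergent if there is $a\in X$ with $\lim_{n\to\infty}\frac1n|\{k\le n: d(z_k,a)\ge\epsilon\}|=0$ for every $\epsilon>0$; a subsequence $(y_{n(k)})_k$ is regarded as the sequence $k\mapsto y_{n(k)}$. *)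

From HB Require Import structures.
From mathcomp Require Import all_boot all_order all_algebra.
From mathcomp Require Import all_classical all_reals all_analysis.
Set Implicit Arguments. Unset Strict Implicit. Unset Printing Implicit Defensive.
Import Order.TTheory GRing.Theory Num.Theory.
Import numFieldNormedType.Exports.
Local Open Scope classical_set_scope.
Local Open Scope ring_scope.

(* Sequences are indexed by nat (0-based); the n-th "initial segment" is
   the set of indices m < n, i.e. the first n indices. *)

Definition is_metric (R : realType) (X : Type) (d : X -> X -> R) : Prop :=
  (forall x y, 0 <= d x y) /\
  (forall x y, d x y = 0 <-> x = y) /\
  (forall x y, d x y = d y x) /\
  (forall x y z, d x z <= d x y + d y z).

Definition count_upto (M : set nat) (n : nat) : nat :=
  \sum_(0 <= m < n) ((m \in M) : nat).

(* a subsequence is given by a strictly increasing index map sub : nat -> nat;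
   K_sub = { sub k : k in nat } *)
Definition Kset (sub : nat -> nat) : set nat := range sub.

Definition strictly_increasing (sub : nat -> nat) : Prop :=
  forall k, (sub k < sub k.+1)%N.

Definition Kratio (R : realType) (sub : nat -> nat) (n : nat) : R :=
  (count_upto (Kset sub) n)%:R / n%:R.

Definition stat_dense (R : realType) (M : set nat) : Prop :=
  (fun n : nat => ((count_upto M n)%:R / n%:R : R)) @ \oo --> (1 : R).

Definition stat_equiv (X : Type) (x y : nat -> X) (R : realType) : Prop :=
  exists M : set nat, stat_dense R M /\ (forall n, M n -> x n = y n).

Definition d_stat_convergent (R : realType) (X : Type) (d : X -> X -> R)
  (z : nat -> X) : Prop :=
  exists a : X, forall eps : R, 0 < eps ->
    (fun n : nat =>
       ((count_upto [set k | eps <= d (z k) a] n)%:R / n%:R : R)) @ \oo --> (0 : R).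

(* Off the index set K = range nk, which has density 0, let y agree with x;
   on K, let y alternate between two distinct points a and b, i.e. y (nk k) is
   b for odd k and a for even k.  Then x and y agree on the complement of K,
   which has density 1, and the subsequence y o nk is not statistically
   convergent: every point c is at distance at least d(a,b)/2 from a or from b,
   so at least half of the terms stay that far from c. *)
From HB Require Import structures.
From mathcomp Require Import all_boot all_order all_algebra.
From mathcomp Require Import all_classical all_reals all_analysis.
From mathcomp Require Import lra zify.
Set Implicit Arguments. Unset Strict Implicit. Unset Printing Implicit Defensive.
Import Order.TTheory GRing.Theory Num.Theory.
Import numFieldNormedType.Exports.
Local Open Scope classical_set_scope.
Local Open Scope ring_scope.

Lemma count_uptoC (A : set nat) n : (count_upto A n + count_upto (~` A) n)%N = n.
Proof.
rewrite /count_upto -big_split /= (eq_bigr (fun _ => 1%N)).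
  by rewrite sum_nat_const_nat muln1 subn0.
by move=> m _; rewrite in_setC; case: (m \in A).
Qed.

Lemma count_upto_le (A : set nat) n : (count_upto A n <= n)%N.
Proof. by rewrite -{2}(count_uptoC A n) leq_addr. Qed.

Lemma count_upto_subset (A B : set nat) n :
  A `<=` B -> (count_upto A n <= count_upto B n)%N.
Proof.
move=> AB; apply: leq_sum => m _.
by case: (boolP (m \in A)) => //= /set_mem/AB/mem_set ->.
Qed.

Lemma count_upto_pred (P : pred nat) n :
  count_upto [set k | P k] n = (\sum_(0 <= m < n) P m)%N.
Proof.
by apply: eq_bigr => m _; congr nat_of_bool; apply/idP/idP => [/set_mem|/mem_set].
Qed.

Lemma count_upto_odd n : count_upto [set k | odd k] n = n./2.
Proof.
rewrite count_upto_pred; elim: n => [|n IHn]; first by rewrite big_geq.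
by rewrite big_nat_recr //= IHn uphalf_half addnC.
Qed.

Lemma count_upto_even n : count_upto [set k | ~~ odd k] n = uphalf n.
Proof.
rewrite count_upto_pred; elim: n => [|n IHn]; first by rewrite big_geq.
by rewrite big_nat_recr //= IHn uphalf_half; case: (odd n); rewrite ?addn0 ?addn1.
Qed.

Lemma nonneg_limn_sup0_cvg (R : realType) (u : R^nat) :
  (forall n, 0 <= u n) -> has_ubound (range u) -> limn_sup u = 0 ->
  u @ \oo --> 0.
Proof.
move=> u_ge0 ub sup0.
have lb : has_lbound (range u) by exists 0 => _ [n _ <-].
have sups_cvg := cvg_sups_inf ub lb.
have sups_lim : limn_sup u = inf (range (sups u)) by exact: cvg_lim.
rewrite -sups_lim sup0 in sups_cvg.
apply: (squeeze_cvgr _ (cvg_cst 0) sups_cvg); apply: nearW => n.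
rewrite u_ge0 /=; apply: ub_le_sup; first exact: has_ubound_sdrop.
by exists n => /=.
Qed.

Lemma count_upto_ratio_le1 (R : realType) (A : set nat) n :
  ((count_upto A n)%:R / n%:R : R) <= 1.
Proof.
case: n => [|n]; first by rewrite invr0 mulr0.
by rewrite ler_pdivrMr ?ltr0n // mul1r ler_nat count_upto_le.
Qed.

Lemma Kratio_cvg0 (R : realType) (nk : nat -> nat) :
  limn_sup (Kratio R nk) = 0 -> Kratio R nk @ \oo --> 0.
Proof.
apply: nonneg_limn_sup0_cvg; first by move=> n; rewrite divr_ge0.
by exists 1 => _ [n _ <-]; apply: count_upto_ratio_le1.
Qed.

Lemma stat_denseC (R : realType) (A : set nat) :
  (fun n => (count_upto A n)%:R / n%:R : R) @ \oo --> 0 -> stat_dense R (~` A).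
Proof.
move=> A0.
have ratioC : {near \oo, (fun n => 1 - (count_upto A n)%:R / n%:R) =1
    (fun n => (count_upto (~` A) n)%:R / n%:R : R)}.
  exists 1%N => // n /= n_gt0.
  have -> : count_upto (~` A) n = (n - count_upto A n)%N.
    by rewrite -{2}(count_uptoC A n) addKn.
  rewrite natrB ?count_upto_le // mulrBl divff //.
  by rewrite pnatr_eq0 -lt0n.
apply: cvg_trans (near_eq_cvg ratioC) _.
by have := cvgB (cvg_cst (1 : R)) A0; rewrite subr0; exact.
Qed.

Lemma half_ratio_ge_quarter (R : realType) n :
  (2 <= n)%N -> 1 / 4 <= ((n./2)%:R / n%:R : R).
Proof.
move=> n_ge2; have n_gt0 : 0 < n%:R :> R by rewrite ltr0n; lia.
have : (n <= 4 * n./2)%N.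
  have : (1 <= n./2)%N by rewrite half_gt0.
  by rewrite -{1}(odd_double_half n) -addnn; case: (odd n) => /=; lia.
rewrite -(ler_nat R) natrM => le_n.
rewrite ler_pdivrMr // mulrAC ler_pdivlMr //; lra.
Qed.

Lemma metric_half_dist_le (R : realType) (X : Type) (d : X -> X -> R) a b c :
  is_metric d -> d a b / 2 <= d a c \/ d a b / 2 <= d b c.
Proof.
move=> [_ [_ [d_sym d_tri]]]; have := d_tri a c b; rewrite (d_sym c b) => tri.
by case: (leP (d a b / 2) (d a c)) => h; [left | right; lra].
Qed.

Lemma alternating_not_d_stat_convergent (R : realType) (X : Type)
    (d : X -> X -> R) (a b : X) :
  is_metric d -> a <> b ->
  ~ d_stat_convergent d (fun k => if odd k then b else a).
Proof.
move=> d_metric ab [c c_lim]; have [d_ge0 [d_eq0 _]] := d_metric.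
have ab_gt0 : 0 < d a b / 2.
  rewrite divr_gt0 // lt_neqAle d_ge0 andbT.
  by apply/eqP => /esym /d_eq0.
pose far := [set k | d a b / 2 <= d (if odd k then b else a) c].
have far_half n : (n./2 <= count_upto far n)%N.
  case: (metric_half_dist_le a b c d_metric) => [near_a | near_b].
  - apply: leq_trans (count_upto_subset n (_ : [set k | ~~ odd k] `<=` far)).
      by rewrite count_upto_even uphalf_half leq_addl.
    by move=> k /= /negbTE k_even; rewrite /far /= k_even.
  - rewrite -count_upto_odd; apply: count_upto_subset => k /= k_odd.
    by rewrite /far /= k_odd.
have quarter_gt0 : (0 : R) < 1 / 4 by lra.
case: (cvgr_lt _ (c_lim _ ab_gt0) _ quarter_gt0) => N _ small.
have := small (maxn N 2) (leq_maxl _ _); apply/negP; rewrite -leNgt.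
apply: le_trans (half_ratio_ge_quarter R (leq_maxr N 2)) _.
apply: ler_pM => //; first by rewrite ler_nat far_half.
Qed.

Lemma exists_eq_off_range (X : Type) (x z : nat -> X) (f : nat -> nat) :
  injective f ->
  exists y : nat -> X, (forall n, ~ range f n -> y n = x n) /\ y \o f = z.
Proof.
move=> f_inj.
exists (fun n => if pselect (range f n) is left fn then z (s2val (cid2 fn))
                 else x n).
split => [n fn | ]; first by case: pselect.
apply/funext => k /=; case: pselect => [fk | []]; last by exists k.
by case: cid2 => j /= _ /f_inj ->.
Qed.

Theorem lemma2 (R : realType) (X : Type) (d : X -> X -> R)
  (hd : is_metric d) (hX : exists a b : X, a <> b)
  (x : nat -> X) (nk : nat -> nat) (hnk : strictly_increasing nk)
  (hK : limn_sup (Kratio R nk) = 0) :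
  exists (y : nat -> X) (mk : nat -> nat),
    [/\ strictly_increasing mk,
        stat_equiv x y R,
        Kset mk = Kset nk &
        ~ d_stat_convergent d (fun k => y (mk k))].
Proof.
case: hX => a [b ab].
have nk_inj : injective nk.
  apply: incn_inj; apply: leq_mono; apply: homo_ltn hnk; exact: ltn_trans.
have [y [y_off y_on]] :=
  exists_eq_off_range x (fun k => if odd k then b else a) nk_inj.
exists y, nk; split => //.
- exists (~` Kset nk); split; first exact/stat_denseC/Kratio_cvg0.
  by move=> n /y_off ->.
- by rewrite -[fun k => _]/(y \o nk) y_on; exact: alternating_not_d_stat_convergent.
Qed.
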